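(* Consider any $(M,N)$-VLFT code for a $K$-user DM-BC, and fix $j\in\{1,\dots,K\}$ with $P_{Y_j|X}(y|x)>0$ for all $x\in\mathcal X$, $y\in\mathcal Y_j$. Then for every $n\ge0$, every $y\in\mathcal Y_j$ and every realization $y_j^n$ of $Y_j^n$ with $\mathbb P(Y_j^n=y_j^n)>0$ and $\mathcal H(W|Y_j^n=y_j^n)>0$, $$\ln\mathcal H(W|Y_j^n=y_j^n)-\ln\mathcal H(W|Y_j^{n+1}=(y_j^n,y))\le\ln T_j.$$
   Context: A $K$-user discrete memoryless broadcast channel (DM-BC) consists of a finite input alphabet $\mathcal X$, finite output alphabets $\mathcal Y_1,\dots,\mathcal Y_K$ and a transition law $P_{Y_1,\dots,Y_K|X}$; $P_{Y_j|X}$ denotes its $j$-th marginal. Logarithms are natural. An $(M,N)$-VLFT code ($M$ a positive integer, $N>0$ real) consists of: a message $W$ uniform on $\mathcal W=\{1,\dots,M\}$; encoders $f_n:\mathcal W\times\mathcal Y_1^{n-1}\times\cdots\times\mathcal Y_K^{n-1}\to\mathcal X$, $n\ge1$, with $X_n=f_n(W,Y_1^{n-1},\dots,Y_K^{n-1})$, where given $(W,X^n,Y_1^{n-1},\dots,Y_K^{n-1})$ the tuple $(Y_{1,n},\dots,Y_{K,n})$ is distributed as $P_{Y_1,\dots,Y_K|X}(\cdot|X_n)$; decoders $g^{(j)}_n:\mathcal Y_j^n\to\mathcal W$; for each $j$ a stopping time $\tau_j$ of the filtration $\{\sigma(Y_j^n)\}_{n\ge0}$, with $\tau=\max_j\tau_j$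 satisfying $\mathbb E[\tau]\le N$. For a realization $z$ of a random vector $Z$, $\mathcal H(W|Z=z):=-\sum_{w\in\mathcal W}\mathbb P(W=w|Z=z)\ln\mathbb P(W=w|Z=z)$. $T_j=\max_{x,x'\in\mathcal X,\,y\in\mathcal Y_j}\frac{P_{Y_j|X}(y|x)}{P_{Y_j|X}(y|x')}$. *)

From Stdlib Require Import Reals.
From mathcomp Require Import all_boot.
Set Implicit Arguments. Unset Strict Implicit. Unset Printing Implicit Defensive.
Local Open Scope R_scope.

Definition Rsum (l : seq R) : R := foldr Rplus 0 l.

Definition Zout (K : nat) (Y : 'I_K -> finType) : finType :=
  {dffun forall k : 'I_K, Y k}.

Definition marg K (Y : 'I_K -> finType) (X : finType) (P : X -> Zout Y -> R)
  (j : 'I_K) (x : X) (y : Y j) : R :=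
  Rsum [seq P x z | z : Zout Y <- enum (Zout Y) & z j == y].

Arguments marg [K Y X] P j x y.

Definition is_channel K (Y : 'I_K -> finType) (X : finType) (P : X -> Zout Y -> R) :=
  (forall x z, 0 <= P x z) /\ (forall x, Rsum [seq P x z | z <- enum (Zout Y)] = 1).

(* Encoder: f w s = X_{n} where s = (joint outputs Y_{1..K,1}, ..., Y_{1..K,n-1}),
   i.e. the family (f_n)_n is encoded by the length of the past sequence s.
   pw_aux w past future = P(outputs "future" follow | W = w, past outputs "past"). *)
Fixpoint pw_aux K (Y : 'I_K -> finType) (X : finType) (P : X -> Zout Y -> R)
  (M : nat) (f : 'I_M -> seq (Zout Y) -> X) (w : 'I_M)
  (past future : seq (Zout Y)) : R :=
  match future with
  | [::] => 1
  | z :: fut => P (f w past) z * pw_aux P f w (rcons past z) fut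
  end.

Definition pw K (Y : 'I_K -> finType) (X : finType) (P : X -> Zout Y -> R)
  (M : nat) (f : 'I_M -> seq (Zout Y) -> X) (w : 'I_M) (zs : seq (Zout Y)) : R :=
  pw_aux P f w [::] zs.

Definition allseqs (T : finType) (n : nat) : seq (seq T) :=
  [seq val t | t <- enum {: n.-tuple T}].

(* P(W = w, Y_j^n = ys), n = size ys, W uniform on M messages *)
Definition PWY K (Y : 'I_K -> finType) (X : finType) (P : X -> Zout Y -> R)
  (M : nat) (f : 'I_M -> seq (Zout Y) -> X) (j : 'I_K) (w : 'I_M) (ys : seq (Y j)) : R :=
  / INR M * Rsum [seq pw P f w zs | zs <- allseqs (Zout Y) (size ys)
                                  & [seq z j | z : Zout Y <- zs] == ys].

Definition PY K (Y : 'I_K -> finType) (X : finType) (P : X -> Zout Y -> R)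
  (M : nat) (f : 'I_M -> seq (Zout Y) -> X) (j : 'I_K) (ys : seq (Y j)) : R :=
  Rsum [seq PWY P f w ys | w <- enum 'I_M].

Definition post K (Y : 'I_K -> finType) (X : finType) (P : X -> Zout Y -> R)
  (M : nat) (f : 'I_M -> seq (Zout Y) -> X) (j : 'I_K) (w : 'I_M) (ys : seq (Y j)) : R :=
  PWY P f w ys / PY P f ys.

Definition xlnx (p : R) : R := if Rlt_dec 0 p then p * ln p else 0.

Definition Hcond K (Y : 'I_K -> finType) (X : finType) (P : X -> Zout Y -> R)
  (M : nat) (f : 'I_M -> seq (Zout Y) -> X) (j : 'I_K) (ys : seq (Y j)) : R :=
  - Rsum [seq xlnx (post P f w ys) | w <- enum 'I_M].

Definition Tj K (Y : 'I_K -> finType) (X : finType) (P : X -> Zout Y -> R) (j : 'I_K) : R :=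
  foldr Rmax 0
    (flatten [seq flatten [seq [seq marg P j x y / marg P j x' y | y <- enum (Y j)]
                          | x' <- enum X] | x <- enum X]).

(* If every P_{Y_j|X}(y|.) lies within a factor T_j of its minimum m, then
   appending the symbol y multiplies each joint weight P(W = w, Y_j^n = y^n) by a
   factor in [m, T_j m], hence the new posterior p' dominates p / T_j.  Then
   p' = p / T_j + (1 - 1/T_j) q for a probability vector q, and concavity of the
   entropy gives H(p') >= H(p) / T_j + (1 - 1/T_j) H(q) >= H(p) / T_j. *)
From Stdlib Require Import Reals Lra Psatz.
From mathcomp Require Import all_boot all_order all_algebra Rstruct.
Set Implicit Arguments. Unset Strict Implicit. Unset Printing Implicit Defensive.
Import Order.TTheory.
Local Open Scope R_scope.

Lemma Rsum_big (I : Type) (s : seq I) (F : I -> R) :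
  Rsum [seq F x | x <- s] = (\sum_(x <- s) F x)%R.
Proof. by elim: s => [|a s IH] /=; rewrite ?big_nil ?big_cons ?IH. Qed.

Lemma Rsum_filter_big (I : Type) (s : seq I) (p : pred I) (F : I -> R) :
  Rsum [seq F x | x <- s & p x] = (\sum_(x <- s | p x) F x)%R.
Proof. by rewrite Rsum_big big_filter. Qed.

Lemma Rsum_scal (I : Type) (s : seq I) (a : R) (F : I -> R) :
  Rsum [seq a * F x | x <- s] = a * Rsum (map F s).
Proof. by elim: s => [|b s IH] /=; rewrite ?IH; ring. Qed.

Lemma Rsum_div (I : Type) (s : seq I) (F : I -> R) (c : R) :
  Rsum [seq F x / c | x <- s] = Rsum (map F s) / c.
Proof. by elim: s => [|b s IH] /=; rewrite ?IH /Rdiv; ring. Qed.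

Lemma Rsum_sub (I : Type) (s : seq I) (F G : I -> R) :
  Rsum [seq F x - G x | x <- s] = Rsum (map F s) - Rsum (map G s).
Proof. by elim: s => [|b s IH] /=; rewrite ?IH; ring. Qed.

Lemma Rsum_le_in (I : eqType) (s : seq I) (F G : I -> R) :
  {in s, forall x, F x <= G x} -> Rsum (map F s) <= Rsum (map G s).
Proof.
elim: s => [|a s IH] /= H; first lra.
have := H a (mem_head a s); have := IH (fun x xs => H x (@mem_behead _ (a :: s) x xs)).
lra.
Qed.

Lemma Rsum_le (I : eqType) (s : seq I) (F G : I -> R) :
  (forall x, F x <= G x) -> Rsum (map F s) <= Rsum (map G s).
Proof. by move=> H; apply: Rsum_le_in => x _. Qed.

Lemma Rsum_ge0 (I : Type) (s : seq I) (F : I -> R) :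
  (forall x, 0 <= F x) -> 0 <= Rsum (map F s).
Proof. by move=> H; elim: s => [|a s IH] /=; [lra | have := H a; lra]. Qed.

Lemma Rsum_ge_term (I : eqType) (s : seq I) (F : I -> R) (x : I) :
  (forall x, 0 <= F x) -> x \in s -> F x <= Rsum (map F s).
Proof.
move=> H; elim: s => [|a s IH] //=; rewrite in_cons => /orP[/eqP->|xs].
  by have := Rsum_ge0 s H; lra.
by have := IH xs; have := H a; lra.
Qed.

Lemma Rinv_INR_ge0 (n : nat) : 0 <= / INR n.
Proof.
case: n => [|n]; first by rewrite Rinv_0; lra.
by apply/Rlt_le/Rinv_0_lt_compat/lt_0_INR; lia.
Qed.

Lemma ln_le_sub1 (t : R) : 0 < t -> ln t <= t - 1.
Proof. by move=> t0; have := exp_ineq1_le (ln t); rewrite exp_ln //; lra. Qed.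

Lemma ln_sub_le_ln (a b t : R) : 0 < a -> 0 < t -> / t * a <= b ->
  ln a - ln b <= ln t.
Proof.
move=> a0 t0 ab; have it0 : 0 < / t by apply: Rinv_0_lt_compat.
have b0 : 0 < b by nra.
have : a <= t * b.
  by apply: (Rmult_le_reg_l (/ t)) => //; rewrite -Rmult_assoc Rinv_l; lra.
case/Rle_lt_or_eq_dec => [lt_ab | ->]; last by rewrite ln_mult //; lra.
by have := ln_increasing _ _ a0 lt_ab; rewrite ln_mult //; lra.
Qed.

Lemma xlnx0 : xlnx 0 = 0.
Proof. by rewrite /xlnx; case: Rlt_dec => [/Rlt_irrefl []|]. Qed.

Lemma xlnx_gt0 (p : R) : 0 < p -> xlnx p = p * ln p.
Proof. by rewrite /xlnx; case: Rlt_dec. Qed.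

(* the tangent line of x ln x at c lies below its graph *)
Lemma xlnx_ge_tangent (a c : R) : 0 <= a -> 0 < c -> a - c <= xlnx a - a * ln c.
Proof.
move=> a0 c0; case: (Req_dec a 0) => [->|an0]; first by rewrite xlnx0; lra.
have ap : 0 < a by lra.
have := ln_le_sub1 (Rdiv_lt_0_compat _ _ c0 ap).
rewrite /Rdiv ln_mult ?ln_Rinv; try by [| apply: Rinv_0_lt_compat].
have ca : a * (c * / a) = c by field; lra.
by rewrite xlnx_gt0 //; nra.
Qed.

Lemma xlnx_convex (l a q : R) : 0 <= l <= 1 -> 0 <= a -> 0 <= q ->
  xlnx (l * a + (1 - l) * q) <= l * xlnx a + (1 - l) * xlnx q.
Proof.
move=> l01 a0 q0; set c := l * a + (1 - l) * q.
have c0 : 0 <= c by rewrite /c; nra.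
case: (Req_dec c 0) => [c_eq0 | c_neq0].
  have scale_xlnx0 u v : u * v = 0 -> u * xlnx v = 0.
    by case/Rmult_integral => ->; rewrite ?xlnx0; ring.
  have la0 : l * a = 0 by rewrite /c in c_eq0; nra.
  have lq0 : (1 - l) * q = 0 by rewrite /c in c_eq0; nra.
  by rewrite c_eq0 xlnx0 (scale_xlnx0 l a) // (scale_xlnx0 (1 - l) q) //; lra.
have cp : 0 < c by lra.
have := xlnx_ge_tangent a0 cp; have := xlnx_ge_tangent q0 cp.
by rewrite (xlnx_gt0 cp) /c; nra.
Qed.

Lemma xlnx_le0 (q : R) : 0 <= q <= 1 -> xlnx q <= 0.
Proof.
move=> q01; case: (Req_dec q 0) => [->|qn0]; first by rewrite xlnx0; lra.
have qp : 0 < q by lra.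
by rewrite (xlnx_gt0 qp); have := ln_le_sub1 qp; nra.
Qed.

(* writing p' = l p + (1 - l) q, the bounds say exactly that q is in [0, 1] *)
Lemma xlnx_le_mix (l p p' : R) : 0 < l <= 1 -> 0 <= p ->
  l * p <= p' <= 1 - l + l * p -> xlnx p' <= l * xlnx p.
Proof.
move=> l01 p0 p'b; case: (Req_dec l 1) => [l1 | l_neq1].
  have -> : p' = p by rewrite l1 in p'b; lra.
  by rewrite l1; lra.
set q := (p' - l * p) / (1 - l).
have q01 : 0 <= q <= 1.
  rewrite /q; split; first by apply: Rmult_le_pos; [lra | apply/Rlt_le/Rinv_0_lt_compat; lra].
  apply: (Rmult_le_reg_r (1 - l)); first lra.
  by rewrite /Rdiv Rmult_assoc Rinv_l; lra.
have -> : p' = l * p + (1 - l) * q by rewrite /q; field; lra.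
have := xlnx_convex (_ : 0 <= l <= 1) p0 (proj1 q01); have := xlnx_le0 q01; nra.
Qed.

Definition entropy (I : Type) (s : seq I) (p : I -> R) : R :=
  - Rsum [seq xlnx (p w) | w <- s].

Lemma entropy_ge_scale (I : eqType) (s : seq I) (p p' : I -> R) (l : R) :
  0 < l <= 1 -> (forall w, 0 <= p w) ->
  Rsum (map p s) = 1 -> Rsum (map p' s) = 1 -> (forall w, l * p w <= p' w) ->
  l * entropy s p <= entropy s p'.
Proof.
move=> l01 p0 p1 p'1 p'_ge.
suff : Rsum [seq xlnx (p' w) | w <- s] <= Rsum [seq l * xlnx (p w) | w <- s].
  by rewrite /entropy Rsum_scal; lra.
apply: Rsum_le_in => w ws; apply: xlnx_le_mix => //; split; first exact: p'_ge.
have gap_ge0 v : 0 <= p' v - l * p v by have := p'_ge v; lra.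
by have := Rsum_ge_term gap_ge0 ws; rewrite Rsum_sub Rsum_scal p1 p'1; lra.
Qed.

Lemma mem_allseqs (T : finType) (n : nat) (s : seq T) :
  (s \in allseqs T n) = (size s == n).
Proof.
apply/mapP/idP => [[t _ ->] | sn]; first by rewrite size_tuple.
by exists (Tuple sn); rewrite ?mem_enum.
Qed.

Lemma uniq_allseqs (T : finType) (n : nat) : uniq (allseqs T n).
Proof. by rewrite map_inj_uniq ?enum_uniq //; exact: val_inj. Qed.

Lemma perm_allseqs_rcons (T : finType) (n : nat) :
  perm_eq (allseqs T n.+1) [seq rcons s z | s <- allseqs T n, z <- enum T].
Proof.
apply: uniq_perm; first exact: uniq_allseqs.
  apply: allpairs_uniq; [exact: uniq_allseqs | exact: enum_uniq |].
  by move=> [a b] [c d] _ _ /= /eqP; rewrite eqseq_rcons => /andP[/eqP-> /eqP->].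
move=> u; rewrite mem_allseqs; apply/idP/allpairsP => [|[[s z]] /= [+ _ ->]].
  case/lastP: u => [|s z] //; rewrite size_rcons eqSS => sn.
  by exists (s, z); rewrite mem_allseqs sn mem_enum.
by rewrite mem_allseqs size_rcons.
Qed.

Section Posterior.
Variables (K : nat) (X : finType) (Y : 'I_K -> finType)
  (P : X -> Zout Y -> R) (M : nat) (f : 'I_M -> seq (Zout Y) -> X) (j : 'I_K).
Hypothesis P_ge0 : forall x z, 0 <= P x z.

Lemma pw_aux_rcons (w : 'I_M) (past s : seq (Zout Y)) (z : Zout Y) :
  pw_aux P f w past (rcons s z) = pw_aux P f w past s * P (f w (past ++ s)) z.
Proof.
elim: s past => [|a s IH] past /=; first by rewrite cats0; ring.
by rewrite IH cat_rcons Rmult_assoc.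
Qed.

Lemma pw_rcons (w : 'I_M) (s : seq (Zout Y)) (z : Zout Y) :
  pw P f w (rcons s z) = pw P f w s * P (f w s) z.
Proof. exact: pw_aux_rcons. Qed.

Lemma pw_ge0 (w : 'I_M) (s : seq (Zout Y)) : 0 <= pw P f w s.
Proof.
elim/last_ind: s => [|s z IH]; first by rewrite /pw /=; lra.
by rewrite pw_rcons; apply: Rmult_le_pos.
Qed.

Lemma PWY_ge0 (w : 'I_M) (ys : seq (Y j)) : 0 <= PWY P f w ys.
Proof.
by apply: Rmult_le_pos; [exact: Rinv_INR_ge0 | apply: Rsum_ge0; exact: pw_ge0].
Qed.

Lemma PWY_rcons (w : 'I_M) (yn : seq (Y j)) (y : Y j) :
  PWY P f w (rcons yn y) = / INR M *
    Rsum [seq pw P f w zs * marg P j (f w zs) y | zs <- allseqs (Zout Y) (size yn)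
                                  & [seq z j | z : Zout Y <- zs] == yn].
Proof.
rewrite /PWY size_rcons; congr (_ * _).
rewrite !Rsum_filter_big (perm_big _ (perm_allseqs_rcons _ _)) big_mkcond.
rewrite big_allpairs_dep /= [RHS]big_mkcond; apply: eq_bigr => s _.
under eq_bigr => z _ do rewrite map_rcons eqseq_rcons.
case: eqP => [_ | _] /=; last by rewrite big1.
rewrite -big_mkcond /marg Rsum_filter_big; symmetry.
apply: etrans; first exact: GRing.mulr_sumr.
by apply: eq_bigr => z _; rewrite pw_rcons.
Qed.

Section Bounds.
Variables (yn : seq (Y j)) (y : Y j) (a b : R).
Hypothesis marg_bounds : forall x, a <= marg P j x y <= b.

Lemma PWY_rcons_bounds (w : 'I_M) :
  a * PWY P f w yn <= PWY P f w (rcons yn y) <= b * PWY P f w yn.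
Proof.
rewrite PWY_rcons /PWY -!Rsum_scal; split; apply: Rsum_le => zs;
  have := Rmult_le_pos _ _ (Rinv_INR_ge0 M) (pw_ge0 w zs); have := marg_bounds (f w zs); nra.
Qed.

Lemma PY_rcons_bounds : a * PY P f yn <= PY P f (rcons yn y) <= b * PY P f yn.
Proof.
by rewrite /PY -!Rsum_scal; split; apply: Rsum_le => w; have := PWY_rcons_bounds w; lra.
Qed.

Lemma post_rcons_ge (w : 'I_M) : 0 < a -> 0 < PY P f yn ->
  a / b * post P f w yn <= post P f w (rcons yn y).
Proof.
move=> a0; have [PYa PYb] := PY_rcons_bounds; have [PWa _] := PWY_rcons_bounds w.
move: (PWY_ge0 w yn) PWa PYa PYb; rewrite /post.
move: (PWY P f w yn) (PWY P f w (rcons yn y)) (PY P f yn) (PY P f (rcons yn y)).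
move=> A A' S S' A0 AA' SS' S'S S0.
have S'0 : 0 < S' by nra.
have b0 : 0 < b by nra.
have -> : a / b * (A / S) = a * A / (b * S) by field; lra.
apply: (Rle_trans _ (a * A / S')).
  by apply/Rmult_le_compat_l/Rinv_le_contravar; nra.
by apply/Rmult_le_compat_r/AA'/Rlt_le/Rinv_0_lt_compat.
Qed.

End Bounds.

Lemma post_ge0 (w : 'I_M) (ys : seq (Y j)) : 0 < PY P f ys -> 0 <= post P f w ys.
Proof.
by move=> PY0; apply: Rmult_le_pos; [exact: PWY_ge0 | apply/Rlt_le/Rinv_0_lt_compat].
Qed.

Lemma post_sum1 (ys : seq (Y j)) : 0 < PY P f ys ->
  Rsum [seq post P f w ys | w <- enum 'I_M] = 1.
Proof.
move=> PY0; rewrite /post Rsum_div; change (PY P f ys / PY P f ys = 1).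
by field; lra.
Qed.

End Posterior.

Section MarginalRatio.
Variables (K : nat) (X : finType) (Y : 'I_K -> finType) (P : X -> Zout Y -> R) (j : 'I_K).

Lemma marg_ratio_le_Tj (x x' : X) (y : Y j) :
  marg P j x y / marg P j x' y <= Tj P j.
Proof.
have foldr_Rmax_ge (s : seq R) r : r \in s -> r <= foldr Rmax 0 s.
  elim: s => [|r' s IH] //=; rewrite in_cons => /orP[/eqP-> | rs].
    exact: Rmax_l.
  exact: Rle_trans (IH rs) (Rmax_r _ _).
apply: foldr_Rmax_ge; apply/flattenP; eexists; first by apply: map_f; rewrite mem_enum.
apply/flattenP; eexists; first by apply: map_f; exact: (mem_enum _ x').
by apply: map_f; rewrite mem_enum.
Qed.

Lemma Tj_ge1 (x : X) (y : Y j) :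
  0 < marg P j x y -> 1 <= Tj P j.
Proof. by move=> marg0; have := marg_ratio_le_Tj x x y; rewrite /Rdiv Rinv_r; lra. Qed.

Lemma marg_le_Tj_mul (x x' : X) (y : Y j) :
  0 < marg P j x' y -> marg P j x y <= Tj P j * marg P j x' y.
Proof.
move=> marg0; have ratio := marg_ratio_le_Tj x x' y.
have -> : marg P j x y = marg P j x y / marg P j x' y * marg P j x' y by field; lra.
by apply: Rmult_le_compat_r; lra.
Qed.

End MarginalRatio.

Theorem lemma7 (K : nat) (X : finType) (Y : 'I_K -> finType)
  (P : X -> Zout Y -> R) (M : nat) (f : 'I_M -> seq (Zout Y) -> X) (j : 'I_K) :
  (0 < M)%N ->
  is_channel P ->
  (forall (x : X) (y : Y j), 0 < marg P j x y) ->
  forall (n : nat) (yn : seq (Y j)) (y : Y j),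
    size yn = n ->
    0 < PY P f yn ->
    0 < Hcond P f yn ->
    ln (Hcond P f yn) - ln (Hcond P f (rcons yn y)) <= ln (Tj P j).
Proof.
move=> M0 [P_ge0 _] marg_gt0 n yn y _ PY0 H0.
pose x0 := f (Ordinal M0) [::].
pose xm := [arg min_(x < x0) marg P j x y]%O.
have marg_min x : marg P j xm y <= marg P j x y.
  by rewrite /xm; case: arg_minP => // x1 _ min_x1; apply/RleP/min_x1.
have m0 := marg_gt0 xm y; set m := marg P j xm y in marg_min m0.
have T1 := Tj_ge1 (marg_gt0 x0 y).
have marg_bounds x : m <= marg P j x y <= Tj P j * m.
  by split; [exact: marg_min | exact: marg_le_Tj_mul].
have PY'0 : 0 < PY P f (rcons yn y).
  by have [+ _] := PY_rcons_bounds f P_ge0 yn marg_bounds; nra.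
have post_ge w : / Tj P j * post P f w yn <= post P f w (rcons yn y).
  have := post_rcons_ge P_ge0 marg_bounds w m0 PY0.
  by have -> : m / (Tj P j * m) = / Tj P j by field; lra.
have H_le : / Tj P j * Hcond P f yn <= Hcond P f (rcons yn y).
  apply: entropy_ge_scale (fun w => post_ge0 P_ge0 w PY0)
    (post_sum1 PY0) (post_sum1 PY'0) post_ge.
  by split; [apply: Rinv_0_lt_compat | rewrite -Rinv_1; apply: Rinv_le_contravar]; lra.
by apply: ln_sub_le_ln => //; lra.
Qed.
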